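(* The number of $n$-dimensional realizable Matoušek-type USOs is $2^n\cdot(n+1)^{n-1}$, which lies in $2^{\Theta(n\log n)}$.
   Context: All vectors and matrices are over $GF(2)$; $\oplus$ denotes xor. An orientation of the $n$-dimensional hypercube $\{0,1\}^n$ is given by an outmap $o:\{0,1\}^n\to\{0,1\}^n$, the edge $\{v,v\oplus e_i\}$ being directed away from $v$ iff $o(v)_i=1$. An $n$-dimensional Matoušek-type USO is an orientation $o(v)=M(v\oplus s)$ where $M=PAP^T$ for a permutation matrix $P$ and an invertible upper-triangular $A\in\{0,1\}^{n\times n}$, and $s\in\{0,1\}^n$. Its dimension influence graph is the directed graph on $[n]$ with edge $(i,j)$ iff $M_{j,i}=1$. A USO is realizable if it arises from the (Stickney–Watson) reduction of some non-degenerate P-matrix Linear Complementarity Problem instance to USO sink-finding; it is known that a Matoušek-type USO is realizable iff its dimension influence graph is the reflexive transitive closure of a branching (a forest of rooted trees with edges directed away from the roots). *)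

From HB Require Import structures.
From mathcomp Require Import all_boot all_order all_algebra all_fingroup.
From Stdlib Require Rdefinitions.
From mathcomp Require Import Rstruct.
Set Implicit Arguments. Unset Strict Implicit. Unset Printing Implicit Defensive.
Import Order.TTheory GRing.Theory Num.Theory.
Local Open Scope ring_scope.

(* Vertices of the n-cube {0,1}^n are column vectors over GF(2) = 'F_2;
   xor is addition in 'F_2.  An orientation is given by its outmap. *)
Definition vertex (n : nat) := 'cV['F_2]_n.
Definition outmap (n : nat) := {ffun vertex n -> vertex n}.

Definition upper_triangular n (A : 'M['F_2]_n) : Prop :=
  forall i j : 'I_n, (j < i)%N -> A i j = 0.

Definition matousek_type n (o : outmap n) : Prop :=
  exists (sigma : 'S_n) (A : 'M['F_2]_n) (s : vertex n),
    [/\ upper_triangular A, A \in unitmx &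
        forall v : vertex n,
          o v = (perm_mx sigma *m A *m (perm_mx sigma)^T) *m (v + s)].

Definition principal_minor n (M : 'M[Rdefinitions.R]_n) (S : {set 'I_n}) : Rdefinitions.R :=
  \det (mxsub (@enum_val _ (mem S)) (@enum_val _ (mem S)) M).

Definition P_matrix n (M : 'M[Rdefinitions.R]_n) : Prop :=
  forall S : {set 'I_n}, 0 < principal_minor M S.

(* LCP(M,q): w - M z = q, w, z >= 0, w^T z = 0.  For a vertex v, the
   complementary basis takes z_i as basic variable if v_i = 1 and w_i
   otherwise; its basis matrix has column -M_{.,i} resp. e_i. *)
Definition basis_mx n (M : 'M[Rdefinitions.R]_n) (v : vertex n) : 'M[Rdefinitions.R]_n :=
  \matrix_(i < n, j < n) (if v j 0 == 1 then - M i j else (i == j)%:R).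

Definition basic_sol n (M : 'M[Rdefinitions.R]_n) (q : 'cV[Rdefinitions.R]_n) (v : vertex n) : 'cV[Rdefinitions.R]_n :=
  invmx (basis_mx M v) *m q.

Definition nondegenerate n (M : 'M[Rdefinitions.R]_n) (q : 'cV[Rdefinitions.R]_n) : Prop :=
  forall v : vertex n,
    basis_mx M v \in unitmx /\ forall i : 'I_n, basic_sol M q v i 0 != 0.

(* Stickney-Watson USO: the edge in direction i is outgoing from v iff the
   i-th basic variable at v is negative (the sink is the LCP solution). *)
Definition stickney_watson n (M : 'M[Rdefinitions.R]_n) (q : 'cV[Rdefinitions.R]_n) : outmap n :=
  [ffun v : vertex n => \col_(i < n) (if basic_sol M q v i 0 < 0 then 1 else 0 : 'F_2)].

Definition realizable n (o : outmap n) : Prop :=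
  exists (M : 'M[Rdefinitions.R]_n) (q : 'cV[Rdefinitions.R]_n),
    [/\ P_matrix M, nondegenerate M q & o = stickney_watson M q].

From Pilot Require Import Defs.
From HB Require Import structures.
From mathcomp Require Import all_boot all_order all_algebra all_fingroup.
From Stdlib Require Rdefinitions.
From mathcomp Require Import Rstruct.
From mathcomp Require Import ring lra zify.
Set Implicit Arguments. Unset Strict Implicit. Unset Printing Implicit Defensive.

(* Since M is invertible, a Matousek-type outmap o(v) = M (v + s) determines
   the pair (M, s), so it suffices to count the realizable pairs.

   If o is realizable, compare the basic solutions at the four vertices of the
   face spanned by two dimensions i and j: Cramer's rule for the positive
   2 x 2 principal minor, together with the signs that o prescribes, shows
   that when j influences k but not i, i influences j exactly when it
   influences k.  With the acyclicity coming from the triangular form this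
   makes M the reflexive transitive closure of a branching.  Conversely, for
   such an M let N be its strict influence matrix and D = diag((-1)^(M s)_i);
   the LCP (D (I + 2N) D, D 1) is non-degenerate, D (I + 2N) D is a P-matrix,
   the basic solution at v has entries (-1)^(v_j + (M s)_j + #{active
   influencers of j}), and so the induced USO is exactly o.

   Branchings on n dimensions are rooted forests on n labelled nodes, i.e.
   forests hanging from one extra node; counting them by their set of roots
   gives (n+1)^(n-1), and s can be chosen in 2^n ways. *)

Definition forest_count m r := if m is 0 then 1 else r * (m + r) ^ m.-1.

(* A forest on m.+1 nodes hanging from r nodes is given by its k roots, their
   parents, and a forest on the other nodes hanging from the roots. *)
Lemma forest_count_rec m r : \sum_(k < m.+2) 'C(m.+1, k) *
    (if (k : nat) == 0 then 0 else r ^ k * forest_count (m.+1 - k) k) =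
  r * (m.+1 + r) ^ m.
Proof.
rewrite big_ord_recl /= muln0 add0n expnDn big_distrr /=.
apply: eq_bigr => i _; rewrite /bump /= add1n subSS.
have := ltn_ord i; rewrite ltnS leq_eqVlt => /orP[/eqP ->|lt].
  by rewrite subnn !binn /= expn0 expnS; ring.
have [d ed] : exists d, m - i = d.+1 by exists (m - i).-1; rewrite prednK // subn_gt0.
rewrite ed /= (_ : d.+1 + i.+1 = m.+1); last by rewrite addnS -ed subnK // ltnW.
transitivity ((i.+1 * 'C(m.+1, i.+1)) * (r ^ i.+1 * m.+1 ^ d)); first ring.
by rewrite -mul_bin_diag !expnS; ring.
Qed.

Section HangingForests.
Variable T : finType.
Implicit Types (A R B : {set T}) (E : {set T * T}).

(* [(x, y) \in E] says that x is a strict ancestor of y in a rooted forest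
   with node set A, each of whose roots hangs below a node of R. *)
Record hanging_forest A R E : Prop := HangingForest {
  hf_tgt : forall x y, (x, y) \in E -> y \in A;
  hf_src : forall x y, (x, y) \in E -> x \in A :|: R;
  hf_irr : forall x, (x, x) \notin E;
  hf_trans : forall x y z, (x, y) \in E -> (y, z) \in E -> (x, z) \in E;
  hf_chain : forall x y z, (x, z) \in E -> (y, z) \in E -> x != y ->
    ((x, y) \in E) || ((y, x) \in E);
  hf_rooted : forall z, z \in A -> exists2 r, r \in R & (r, z) \in E }.

Definition hanging_forestb A R E :=
  [&& [forall x, forall y, ((x, y) \in E) ==> (y \in A) && (x \in A :|: R)],
   [forall x, (x, x) \notin E],
   [forall x, forall y, forall z,
      ((x, y) \in E) ==> ((y, z) \in E) ==> ((x, z) \in E)],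
   [forall x, forall y, forall z, ((x, z) \in E) ==> ((y, z) \in E) ==>
      (x != y) ==> ((x, y) \in E) || ((y, x) \in E)] &
   [forall z, (z \in A) ==> [exists r, (r \in R) && ((r, z) \in E)]]].

Lemma hanging_forestP A R E : reflect (hanging_forest A R E) (hanging_forestb A R E).
Proof.
apply: (iffP and5P) =>
  [[/forallP h1 /forallP h2 /forallP h3 /forallP h4 /forallP h5]|[h1 h1' h2 h3 h4 h5]].
  constructor.
  - by move=> x y /(implyP (forallP (h1 x) y)) /andP[].
  - by move=> x y /(implyP (forallP (h1 x) y)) /andP[].
  - exact: h2.
  - move=> x y z Hxy Hyz; move/forallP: (h3 x) => /(_ y) /forallP /(_ z).
    by rewrite Hxy Hyz.
  - move=> x y z Hxz Hyz Hxy; move/forallP: (h4 x) => /(_ y) /forallP /(_ z).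
    by rewrite Hxz Hyz Hxy.
  - move=> z zA; move/implyP: (h5 z) => /(_ zA) /existsP[r /andP[rR rz]].
    by exists r.
split.
- apply/forallP=> x; apply/forallP=> y; apply/implyP=> Hxy.
  by rewrite (h1 _ _ Hxy) (h1' _ _ Hxy).
- by apply/forallP.
- apply/forallP=> x; apply/forallP=> y; apply/forallP=> z.
  by apply/implyP=> H1; apply/implyP=> H2; apply: h3 H1 H2.
- apply/forallP=> x; apply/forallP=> y; apply/forallP=> z.
  by apply/implyP=> H1; apply/implyP=> H2; apply/implyP=> H3; apply: h4 H1 H2 H3.
- apply/forallP=> z; apply/implyP=> zA; have [r rR rz] := h5 z zA.
  by apply/existsP; exists r; rewrite rR rz.
Qed.

Definition hanging_forests A R := [set E | hanging_forestb A R E].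

Lemma in_hanging_forests A R E : E \in hanging_forests A R <-> hanging_forest A R E.
Proof. by rewrite inE; split => /hanging_forestP. Qed.

Definition forest_tops A R E := [set b in A | [forall a, ((a, b) \in E) ==> (a \in R)]].

Lemma forest_topsP A R E b :
  reflect (b \in A /\ forall a, (a, b) \in E -> a \in R) (b \in forest_tops A R E).
Proof.
rewrite inE; apply: (iffP andP) => [[bA /forallP h]|[bA h]].
  by split=> // a; apply/implyP.
by split=> //; apply/forallP=> a; apply/implyP; apply: h.
Qed.

Lemma exists_top_below A R E z : hanging_forest A R E -> z \in A ->
  exists2 b, b \in forest_tops A R E & (b == z) || ((b, z) \in E).
Proof.
move=> hE; have [k] := ubnP #|[set a | (a, z) \in E]|.
elim: k z => // k IH z Hlt zA.
have [zT|] := boolP (z \in forest_tops A R E); first by exists z; rewrite ?eqxx.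
rewrite inE zA /= negb_forall => /existsP[a]; rewrite negb_imply => /andP[az aR].
have aA : a \in A by move: (hf_src hE az); rewrite inE (negbTE aR) orbF.
have sub : [set a' | (a', a) \in E] \proper [set a' | (a', z) \in E].
  apply/properP; split.
    by apply/subsetP => a'; rewrite !inE => a'a; exact: (hf_trans hE a'a az).
  by exists a; rewrite !inE ?(hf_irr hE).
have [b bT /orP[/eqP eba|ba]] := IH a (leq_trans (proper_card sub) Hlt) aA.
  by exists b; rewrite // eba az orbT.
by exists b; rewrite // (hf_trans hE ba az) orbT.
Qed.

(* Hang each node b of B below f b; the descendants of b in E' thereby gain
   f b as an ancestor. *)
Definition graft B (f : {ffun T -> T}) E' : {set T * T} :=
  E' :|: [set (f b, b) | b in B] :|:
  [set (f p.1, p.2) | p in [set p in E' | p.1 \in B]].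

Lemma in_graft B f E' x y : (x, y) \in graft B f E' <->
  [\/ (x, y) \in E', y \in B /\ x = f y |
      exists2 b, b \in B & (b, y) \in E' /\ x = f b].
Proof.
rewrite !inE; split.
  case/orP => [/orP[H|/imsetP[b bB [-> ->]]]|/imsetP[[b c]]].
  - by constructor 1.
  - by constructor 2.
  - by rewrite inE /= => /andP[bc bB] [-> ->]; constructor 3; exists b.
case=> [->//|[yB ->]|[b bB [by_ ->]]].
  by rewrite (imset_f (fun b => (f b, b)) yB) orbT.
by apply/orP; right; apply/imsetP; exists (b, y); rewrite // inE /= by_ bB.
Qed.

Lemma pffun_on_out y0 B R (f : {ffun T -> T}) x :
  f \in pffun_on y0 B R -> x \notin B -> f x = y0.
Proof.
case/pffun_onP => /subsetP sub _ xB; apply/eqP; apply: contraNT xB => h.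
exact: sub.
Qed.

Lemma pffun_on_in y0 B R (f : {ffun T -> T}) x :
  f \in pffun_on y0 B R -> x \in B -> f x \in R.
Proof. by case/pffun_onP => _ sub xB; apply: sub; apply: image_f. Qed.

Lemma pffun_onI y0 B R (f : {ffun T -> T}) :
  (forall x, x \notin B -> f x = y0) -> (forall x, x \in B -> f x \in R) ->
  f \in pffun_on y0 B R.
Proof.
move=> h1 h2; apply/pffun_onP; split.
  by apply/subsetP => x; rewrite inE; apply: contraR => /h1 ->; rewrite eqxx.
by move=> y /imageP[x xB ->]; apply: h2.
Qed.

Section Graft.
Variables (A R B : {set T}) (y0 : T).
Hypotheses (dAR : [disjoint A & R]) (BA : B \subset A).

Lemma disjoint_nodes x : x \in A -> x \in R -> False.
Proof. by move=> xA xR; move/disjointFr: dAR => /(_ x xA); rewrite xR. Qed.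

Lemma setDUB : (A :\: B) :|: B = A.
Proof. by rewrite setUC -{2}(setID A B) (setIidPr BA). Qed.

Definition forest_below E := [set p in E | (p.1 \in A) && (p.2 \in A :\: B)].

Lemma in_forest_below E x y :
  ((x, y) \in forest_below E) = [&& (x, y) \in E, x \in A & y \in A :\: B].
Proof. by rewrite inE. Qed.

Section GraftForest.
Variables (f : {ffun T -> T}) (E' : {set T * T}).
Hypotheses (fP : f \in pffun_on y0 B R) (hE' : hanging_forest (A :\: B) B E').

Let fR b : b \in B -> f b \in R. Proof. exact: pffun_on_in fP. Qed.
Let inA b : b \in B -> b \in A. Proof. exact: subsetP. Qed.

Lemma forest_tgt x y : (x, y) \in E' -> y \in A /\ y \notin B.
Proof. by move/(hf_tgt hE'); rewrite inE => /andP[-> ->]. Qed.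

Lemma forest_src x y : (x, y) \in E' -> x \in A.
Proof. by move/(hf_src hE'); rewrite setDUB. Qed.

Lemma graft_tgt x y : (x, y) \in graft B f E' -> y \in A.
Proof. by case/in_graft => [/forest_tgt[]//|[/inA]//|[b _ [/forest_tgt[]]]]. Qed.

Lemma graft_srcA x y : (x, y) \in graft B f E' -> x \in A -> (x, y) \in E'.
Proof.
by case/in_graft => [//|[yB ->] /disjoint_nodes[]|[b bB [_ ->]] /disjoint_nodes[]];
  apply: fR.
Qed.

Lemma graft_into_B x y : (x, y) \in graft B f E' -> y \in B -> x = f y.
Proof.
by case/in_graft=> [/forest_tgt[_ /negP]//|[_ ->]//|[b _ [/forest_tgt[_ /negP]]]].
Qed.

Lemma graft_outside_B x y : (x, y) \in graft B f E' -> y \notin B ->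
  (x, y) \in E' \/ exists2 b, b \in B & (b, y) \in E' /\ x = f b.
Proof. by case/in_graft=> [|[yB _]|]; [left|rewrite yB|right]. Qed.

Lemma graft_chain x y z : (x, z) \in graft B f E' -> (y, z) \in graft B f E' ->
  x != y -> ((x, y) \in graft B f E') || ((y, x) \in graft B f E').
Proof.
have [zB xz yz|zB] := boolP (z \in B).
  by rewrite (graft_into_B xz zB) (graft_into_B yz zB) eqxx.
have below u b : (u, z) \in E' -> b \in B -> (b, z) \in E' ->
    ((u, f b) \in graft B f E') || ((f b, u) \in graft B f E').
  move=> uz bB bz; apply/orP; right; apply/in_graft.
  have [->|ub] := eqVneq u b; first by constructor 2.
  case/orP: (hf_chain hE' uz bz ub) => [/forest_tgt[_ /negP]//|bu].
  by constructor 3; exists b.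
move=> /graft_outside_B /(_ zB) [xz|[b bB [bz ->]]];
  move=> /graft_outside_B /(_ zB) [yz|[b' bB' [b'z ->]]] nxy.
- by case/orP: (hf_chain hE' xz yz nxy) => h; apply/orP; [left|right];
    apply/in_graft; constructor 1.
- exact: below.
- by rewrite orbC; apply: below.
- have [eb|nb] := eqVneq b b'; first by rewrite eb eqxx in nxy.
  by case/orP: (hf_chain hE' bz b'z nb) => /forest_tgt[_ /negP].
Qed.

Lemma graft_hanging : hanging_forest A R (graft B f E').
Proof.
constructor.
- exact: graft_tgt.
- by move=> x y /in_graft[/forest_src xA|[yB ->]|[b bB [_ ->]]];
    rewrite inE ?xA ?fR ?orbT.
- move=> x; apply/negP => xx; have xA := graft_tgt xx.
  by have := hf_irr hE' x; rewrite (graft_srcA xx xA).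
- move=> x y z xy yz; have {}yz := graft_srcA yz (graft_tgt xy).
  case/in_graft: xy => [xy|[yB ->]|[b bB [by_ ->]]]; apply/in_graft.
  + by constructor 1; exact: (hf_trans hE' xy yz).
  + by constructor 3; exists y.
  + by constructor 3; exists b => //; split=> //; exact: (hf_trans hE' by_ yz).
- exact: graft_chain.
- move=> z zA; have [zB|zB] := boolP (z \in B).
    by exists (f z); [apply: fR|apply/in_graft; constructor 2].
  have [b bB bz] : exists2 b, b \in B & (b, z) \in E'.
    by apply: (hf_rooted hE'); rewrite inE zB.
  by exists (f b); [apply: fR|apply/in_graft; constructor 3; exists b].
Qed.

Lemma graft_tops : forest_tops A R (graft B f E') = B.
Proof.
apply/setP => z; apply/forest_topsP/idP => [[zA zR]|zB].
  apply: contraT => zB.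
  have [b bB bz] : exists2 b, b \in B & (b, z) \in E'.
    by apply: (hf_rooted hE'); rewrite inE zB.
  have bz' : (b, z) \in graft B f E' by apply/in_graft; constructor 1.
  by case: (disjoint_nodes (inA bB) (zR _ bz')).
by split=> [|a /graft_into_B /(_ zB) ->]; [apply: inA|apply: fR].
Qed.

Lemma forest_below_graft : forest_below (graft B f E') = E'.
Proof.
apply/setP => [[x y]]; rewrite in_forest_below; apply/idP/idP => [|xy].
  by case/and3P => /graft_srcA h /h.
have [yA yB] := forest_tgt xy.
by rewrite (forest_src xy) in_setD yA yB !andbT; apply/in_graft; constructor 1.
Qed.

End GraftForest.

Lemma graft_inj f1 E1 f2 E2 :
  f1 \in pffun_on y0 B R -> hanging_forest (A :\: B) B E1 ->
  f2 \in pffun_on y0 B R -> hanging_forest (A :\: B) B E2 ->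
  graft B f1 E1 = graft B f2 E2 -> f1 = f2 /\ E1 = E2.
Proof.
move=> f1P hE1 f2P hE2 e12.
have eE : E1 = E2 by rewrite -(forest_below_graft f1P hE1) e12 forest_below_graft.
split=> //; apply/ffunP => x.
have [xB|xB] := boolP (x \in B); last by rewrite (pffun_on_out f1P xB) (pffun_on_out f2P xB).
have x1x : (f1 x, x) \in graft B f2 E2 by rewrite -e12; apply/in_graft; constructor 2.
by rewrite (graft_into_B hE2 x1x xB).
Qed.

Section Ungraft.
Variable E : {set T * T}.
Hypotheses (hE : hanging_forest A R E) (tE : forest_tops A R E = B).

Definition top_parent := [ffun b => if b \in B then odflt y0 [pick r | (r, b) \in E] else y0].

Let topB b : b \in B -> b \in A /\ forall a, (a, b) \in E -> a \in R.
Proof. by rewrite -tE => /forest_topsP. Qed.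

Lemma top_parentP b : b \in B -> (top_parent b, b) \in E /\ top_parent b \in R.
Proof.
move=> bB; rewrite ffunE bB; case: pickP => [r /= rb|none].
  by split=> //; case: (topB bB) => _; apply.
have [r _] := hf_rooted hE (proj1 (topB bB)).
by rewrite none.
Qed.

Lemma top_parent_unique b x : b \in B -> (x, b) \in E -> x = top_parent b.
Proof.
move=> bB xb; have [fb fR] := top_parentP bB.
have xR := proj2 (topB bB) _ xb.
apply/eqP; apply: contraT => nx.
case/orP: (hf_chain hE xb fb nx) => /(hf_tgt hE) /disjoint_nodes nR.
  by case: (nR fR).
by case: (nR xR).
Qed.

Lemma top_parent_on : top_parent \in pffun_on y0 B R.
Proof.
apply: pffun_onI => x xB; first by rewrite ffunE (negbTE xB).
by case: (top_parentP xB).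
Qed.

Lemma below_top y : y \in A :\: B -> exists2 b, b \in B & (b, y) \in E.
Proof.
rewrite inE => /andP[yB yA].
have [b bT /orP[/eqP eby|by_]] := exists_top_below hE yA.
  by rewrite -eby -tE bT in yB.
by exists b; rewrite // -tE.
Qed.

Lemma not_into_top x y : (x, y) \in E -> x \in A -> y \notin B.
Proof. by move=> xy xA; apply/negP => /topB[_ /(_ x xy) /(disjoint_nodes xA)]. Qed.

Lemma forest_below_hanging : hanging_forest (A :\: B) B (forest_below E).
Proof.
constructor.
- by move=> x y; rewrite in_forest_below => /and3P[].
- by move=> x y; rewrite in_forest_below setDUB => /and3P[].
- by move=> x; rewrite in_forest_below (negbTE (hf_irr hE x)).
- move=> x y z; rewrite !in_forest_below => /and3P[xy xA _] /and3P[yz _ zA].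
  by rewrite (hf_trans hE xy yz) xA zA.
- move=> x y z; rewrite !in_forest_below => /and3P[xz xA _] /and3P[yz yA _] nxy.
  case/orP: (hf_chain hE xz yz nxy) => h; apply/orP; [left|right]; rewrite h /=.
    by rewrite xA inE (not_into_top h xA) (hf_tgt hE h).
  by rewrite yA inE (not_into_top h yA) (hf_tgt hE h).
- move=> z zAB; have [b bB bz] := below_top zAB.
  by exists b; rewrite // in_forest_below bz zAB (proj1 (topB bB)).
Qed.

Lemma graft_forest_below : graft B top_parent (forest_below E) = E.
Proof.
apply/setP => [[x y]]; apply/idP/idP => [/in_graft|xy]; last apply/in_graft.
  case=> [|[yB ->]|[b bB [bx ->]]]; first by rewrite in_forest_below => /and3P[].
    by case: (top_parentP yB).
  by move: bx; rewrite in_forest_below => /and3P[bx _ _];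
    exact: (hf_trans hE (proj1 (top_parentP bB)) bx).
have [yB|yB] := boolP (y \in B); first by constructor 2; split=> //; apply: top_parent_unique.
have yAB : y \in A :\: B by rewrite inE yB (hf_tgt hE xy).
have := hf_src hE xy; rewrite inE => /orP[xA|xR].
  by constructor 1; rewrite in_forest_below xy xA yAB.
have [b bB bz] := below_top yAB; have bA := proj1 (topB bB).
have nxb : x != b by apply: contraPneq (disjoint_nodes bA) => <-.
case/orP: (hf_chain hE xy bz nxb) => [xb|/(hf_tgt hE) /disjoint_nodes /(_ xR)//].
constructor 3; exists b => //; split; first by rewrite in_forest_below bz bA yAB.
exact: top_parent_unique.
Qed.

End Ungraft.

Lemma card_forests_with_tops :
  #|[set E in hanging_forests A R | forest_tops A R E == B]| =
  #|R| ^ #|B| * #|hanging_forests (A :\: B) B|.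
Proof.
rewrite -(card_pffun_on y0 B R) -(cardsE (pffun_on y0 B R)) -cardsX.
have -> : [set E in hanging_forests A R | forest_tops A R E == B] =
    [set graft B p.1 p.2 | p in setX [set f in pffun_on y0 B R] (hanging_forests (A :\: B) B)].
  apply/setP => E; rewrite inE; apply/andP/imsetP.
    case=> /in_hanging_forests hE /eqP tE.
    exists (top_parent E, forest_below E); last by rewrite graft_forest_below.
    rewrite inE /= inE top_parent_on //=; apply/in_hanging_forests.
    exact: forest_below_hanging.
  case=> [[f E']]; rewrite inE /= inE => /andP[fP /in_hanging_forests hE'] ->.
  by split; [apply/in_hanging_forests; apply: graft_hanging|rewrite graft_tops].
rewrite card_in_imset // => [[f1 E1] [f2 E2]]; rewrite !inE /=.
move=> /andP[f1P /hanging_forestP hE1] /andP[f2P /hanging_forestP hE2] /= e.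
by case: (graft_inj f1P hE1 f2P hE2 e) => -> ->.
Qed.

End Graft.

Lemma sum_powerset_by_card A (g : nat -> nat) :
  \sum_(B in powerset A) g #|B| = \sum_(k < #|A|.+1) 'C(#|A|, k) * g k.
Proof.
transitivity (\sum_(B in powerset A) \sum_(k < #|A|.+1) (if #|B| == k then g k else 0)).
  apply: eq_bigr => B; rewrite inE => BA.
  have lt : #|B| < #|A|.+1 by rewrite ltnS subset_leq_card.
  by rewrite -big_mkcond /= (big_pred1 (Ordinal lt)) // => k; rewrite eq_sym.
rewrite exchange_big /=; apply: eq_bigr => k _.
rewrite -big_mkcondr /= -cards_draws.
rewrite (eq_bigl (fun B => B \in [set B : {set T} | B \subset A & #|B| == k])).
  by rewrite sum_nat_const mulnC.
by move=> B; rewrite !inE.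
Qed.

Lemma hanging_forests_set0 R : hanging_forests set0 R = [set set0].
Proof.
apply/setP => E; rewrite !inE; apply/hanging_forestP/eqP => [hE|->].
  by apply/setP => [[x y]]; rewrite inE; apply/negP => /(hf_tgt hE); rewrite inE.
by constructor=> [x y|x y|x|x y z|x y z|z]; rewrite !inE.
Qed.

Lemma forest_tops_neq0 A R E : A != set0 -> hanging_forest A R E ->
  forest_tops A R E != set0.
Proof.
case/set0Pn => z zA hE; have [b bT _] := exists_top_below hE zA.
by apply/set0Pn; exists b.
Qed.

Lemma card_hanging_forests A R : [disjoint A & R] ->
  #|hanging_forests A R| = forest_count #|A| #|R|.
Proof.
move=> dAR; move cA: #|A| => m; elim/ltn_ind: m A R cA dAR => m IH A R cA dAR.
case: m IH cA => [|m] IH cA.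
  by rewrite (cards0_eq cA) hanging_forests_set0 cards1.
have -> : #|hanging_forests A R| = \sum_(B in powerset A)
    #|[set E in hanging_forests A R | forest_tops A R E == B]|.
  rewrite -sum1_card (partition_big (forest_tops A R) (mem (powerset A))) /=.
    by apply: eq_bigr => B _; rewrite -sum1_card; apply: eq_bigl => E; rewrite inE.
  by move=> E _; rewrite inE; apply/subsetP => b /forest_topsP[].
pose g k := if (k : nat) == 0 then 0 else #|R| ^ k * forest_count (m.+1 - k) k.
rewrite (eq_bigr (fun B => g #|B|)) ?sum_powerset_by_card ?cA ?forest_count_rec //.
move=> B; rewrite inE => BA.
have [B0|nB] := eqVneq B set0.
  rewrite B0 cards0; apply/eqP; rewrite cards_eq0; apply/eqP/setP => E; rewrite !inE.
  apply/negP => /andP[/hanging_forestP hE /eqP tE].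
  have nA : A != set0 by rewrite -card_gt0 cA.
  by move: (forest_tops_neq0 nA hE); rewrite tE eqxx.
have [y0 _] := set0Pn _ nB.
rewrite /g cards_eq0 (negbTE nB) (card_forests_with_tops y0 dAR BA).
have cD : #|A :\: B| = m.+1 - #|B| by rewrite cardsD (setIidPr BA) cA.
rewrite (IH (m.+1 - #|B|)) //.
  by rewrite -{2}(subn0 m.+1) ltn_sub2l // lt0n cards_eq0.
by rewrite disjoints_subset setDE subsetIr.
Qed.

End HangingForests.

Lemma exists_perm_antitone n (r : 'I_n -> nat) :
  exists s : 'S_n, forall x y, r y < r x -> s x < s y.
Proof.
pose bef (z x : 'I_n) := (r x < r z) || ((r z == r x) && (z < x)).
have bef_trans z y x : bef z y -> bef y x -> bef z x.
  by rewrite /bef => /orP[h1|/andP[/eqP h1 h2]] /orP[h3|/andP[/eqP h3 h4]];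
    apply/orP; lia.
have bef_irr x : ~~ bef x x by rewrite /bef ltnn eqxx ltnn.
have bef_total x y : x != y -> bef x y || bef y x.
  by move=> nxy; have : (x : nat) != y by []; rewrite /bef; lia.
pose S x := [set z | bef z x].
have S_lt x : #|S x| < n.
  rewrite -[X in _ < X]card_ord; apply: proper_card; apply/properP.
  by split; [apply/subsetP|exists x; rewrite ?inE // bef_irr].
have S_mono x y : bef x y -> #|S x| < #|S y|.
  move=> bxy; apply: proper_card; apply/properP; split.
    by apply/subsetP => z; rewrite !inE => h; apply: bef_trans h bxy.
  by exists x; rewrite !inE // bef_irr.
have S_inj : injective (fun x => Ordinal (S_lt x)).
  move=> x y /(congr1 val) /= e; apply/eqP; apply: contraT => nxy.
  by case/orP: (bef_total x y nxy) => /S_mono; rewrite e ltnn.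
exists (perm S_inj) => x y ryx; rewrite !permE /=.
by apply: S_mono; rewrite /bef ryx.
Qed.

Import Order.TTheory GRing.Theory Num.Theory.
Local Open Scope ring_scope.

Lemma F2_cases (x : 'F_2) : x = 0 \/ x = 1.
Proof. by case: x => [[|[|m]] Hm] //; [left|right]; apply: val_inj. Qed.

Lemma F2_eq1_inj (x y : 'F_2) : (x == 1) = (y == 1) -> x = y.
Proof. by case: (F2_cases x) => ->; case: (F2_cases y) => ->. Qed.

Lemma F2_addr_eq1 (x y : 'F_2) : (x + y == 1) = (x == 1) (+) (y == 1).
Proof. by case: (F2_cases x) => ->; case: (F2_cases y) => ->. Qed.

Lemma F2_neq1 (x : 'F_2) : (x != 1) = (x == 0).
Proof. by case: (F2_cases x) => ->. Qed.

Lemma F2_natr_odd (k : nat) : (k%:R : 'F_2) = (odd k)%:R.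
Proof.
elim: k => // k IH; rewrite -[k.+1]addn1 natrD IH addn1 /=.
by case: (odd k) => /=; apply: val_inj.
Qed.

Section BranchingClosures.
Variable n : nat.
Implicit Types M : 'M['F_2]_n.

Definition influences M (a b : 'I_n) := (a != b) && (M b a == 1).

(* The dimension influence graph of M is the reflexive transitive closure of
   a branching: it is reflexive, strict influence is transitive, and the
   influencers of every dimension form a chain. *)
Record branching_closure M : Prop := BranchingClosure {
  bc_diag : forall i, M i i = 1;
  bc_trans : forall a b c, influences M a b -> influences M b c -> influences M a c;
  bc_chain : forall a b c, influences M a c -> influences M b c -> a != b ->
    influences M a b || influences M b a }.

Definition branching_closureb M :=
  [&& [forall i, M i i == 1],
   [forall a, forall b, forall c,
      influences M a b ==> influences M b c ==> influences M a c] &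
   [forall a, forall b, forall c, influences M a c ==> influences M b c ==>
      (a != b) ==> influences M a b || influences M b a]].

Lemma branching_closureP M : reflect (branching_closure M) (branching_closureb M).
Proof.
apply: (iffP and3P) => [[/forallP h1 /forallP h2 /forallP h3]|[h1 h2 h3]].
  constructor.
  - by move=> i; apply/eqP.
  - move=> a b c H1 H2; move/forallP: (h2 a) => /(_ b) /forallP /(_ c).
    by rewrite H1 H2.
  - move=> a b c H1 H2 H3; move/forallP: (h3 a) => /(_ b) /forallP /(_ c).
    by rewrite H1 H2 H3.
split.
- by apply/forallP => i; rewrite h1.
- apply/forallP=> a; apply/forallP=> b; apply/forallP=> c.
  by apply/implyP=> H1; apply/implyP=> H2; apply: h2 H1 H2.
- apply/forallP=> a; apply/forallP=> b; apply/forallP=> c.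
  by apply/implyP=> H1; apply/implyP=> H2; apply/implyP=> H3; apply: h3 H1 H2 H3.
Qed.

Definition branching_closures := [set M | branching_closureb M].

(* Strict influence, as a forest hanging below the extra node [None]. *)
Definition influence_forest M : {set option 'I_n * option 'I_n} :=
  [set p | match p with
           | (None, Some _) => true
           | (Some a, Some b) => influences M a b
           | _ => false
           end].

Definition dimensions := [set x : option 'I_n | x != None].

Lemma influence_forest_hanging M : branching_closure M ->
  hanging_forest dimensions [set None] (influence_forest M).
Proof.
move=> bM; constructor.
- by move=> [a|] [b|]; rewrite !inE.
- by move=> [a|] [b|]; rewrite !inE.
- by move=> [a|]; rewrite !inE /influences ?eqxx.
- by move=> [a|] [b|] [c|]; rewrite !inE //; apply: bc_trans.
- by move=> [a|] [b|] [c|]; rewrite !inE // => ac bc ab; apply: bc_chain ac bc ab.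
- by move=> [c|]; rewrite !inE // => _; exists None; rewrite !inE.
Qed.

Lemma influence_forest_inj : {in branching_closures &, injective influence_forest}.
Proof.
move=> M1 M2; rewrite !inE => /branching_closureP bM1 /branching_closureP bM2 e.
apply/matrixP => b a; have [->|nab] := eqVneq a b; first by rewrite !bc_diag.
have : (Some a, Some b) \in influence_forest M1 = ((Some a, Some b) \in influence_forest M2).
  by rewrite e.
by rewrite !inE /influences nab /=; apply: F2_eq1_inj.
Qed.

Lemma influence_forest_surj E : hanging_forest dimensions [set None] E ->
  exists2 M, M \in branching_closures & E = influence_forest M.
Proof.
move=> hE.
pose M := \matrix_(b, a) (if a == b then 1 else ((Some a, Some b) \in E)%:R : 'F_2).
have infl a b : influences M a b = ((Some a, Some b) \in E).
  rewrite /influences mxE eq_sym; have [->|nab] //= := eqVneq a b.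
    by rewrite (negbTE (hf_irr hE _)).
  by case: ((Some a, Some b) \in E).
exists M.
  rewrite inE; apply/branching_closureP; constructor.
  - by move=> i; rewrite mxE eqxx.
  - by move=> a b c; rewrite !infl; apply: (hf_trans hE).
  - move=> a b c; rewrite !infl => ac bc nab; apply: (hf_chain hE ac bc).
    by apply: contra nab => /eqP [->].
apply/setP => [[[a|] [b|]]]; rewrite !inE ?infl //;
  try by apply/negP => /(hf_tgt hE); rewrite inE.
have bD : Some b \in dimensions by rewrite inE.
by have [r] := hf_rooted hE bD; rewrite inE => /eqP ->.
Qed.

Lemma card_branching_closures : #|branching_closures| = (n.+1 ^ n.-1)%N.
Proof.
rewrite -(card_in_imset influence_forest_inj).
have -> : [set influence_forest M | M in branching_closures] =
    hanging_forests dimensions [set None].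
  apply/setP => E; apply/imsetP/idP => [[M]|/in_hanging_forests hE].
    rewrite inE => /branching_closureP bM ->; apply/in_hanging_forests.
    exact: influence_forest_hanging.
  by have [M MF ->] := influence_forest_surj hE; exists M.
have -> : dimensions = ~: [set None] by apply/setP => x; rewrite !inE.
rewrite card_hanging_forests; last by rewrite disjoints_subset subxx.
by rewrite cardsC1 card_option card_ord cards1; case: n => //= m; rewrite mul1n addn1.
Qed.

End BranchingClosures.

Lemma det_trig_rank (R : idomainType) k (X : 'M[R]_k) (rho : 'I_k -> nat) :
  (forall a b, a != b -> X a b != 0 -> (rho b < rho a)%N) ->
  \det X = \prod_a X a a.
Proof.
move=> hr; rewrite /determinant (bigD1 1%g) //= [X in _ + X]big1 ?addr0.
  by rewrite odd_perm1 expr0 mul1r; apply: eq_bigr => i _; rewrite perm1.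
move=> s ns; apply/eqP; rewrite mulf_eq0 prodf_seq_eq0; apply/orP; right.
apply: contraT; rewrite -all_predC => /allP /= hall.
have nz i : X i (s i) != 0 by apply: hall; rewrite mem_index_enum.
have le i : (rho (s i) <= rho i)%N.
  by have [<-//|ne] := eqVneq i (s i); apply: ltnW (hr _ _ ne (nz i)).
have [i0 si0] : exists i, s i != i.
  apply/existsP; apply: contraT; rewrite negb_exists => /forallP h.
  suff s1 : s = 1%g by rewrite s1 eqxx in ns.
  by apply/permP => i; rewrite perm1; apply/eqP; rewrite -[_ == _]negbK h.
have lt0 : (rho (s i0) < rho i0)%N by apply: hr; rewrite // eq_sym.
have : (\sum_i rho (s i) < \sum_i rho i)%N.
  rewrite (bigD1 i0) //= [X in (_ < X)%N](bigD1 i0) //= -addSn.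
  by rewrite leq_add // leq_sum // => i _; apply: le.
by rewrite [X in (_ < X)%N](reindex_inj (@perm_inj _ s)) /= ltnn.
Qed.

Lemma det_upper_triangular n (A : 'M['F_2]_n) :
  upper_triangular A -> \det A = \prod_i A i i.
Proof.
move=> upA; apply: (@det_trig_rank _ _ _ (fun a => n - a)%N) => a b nab Aab.
have : ~~ (b < a)%N by apply: contra Aab => h; rewrite upA.
by have := ltn_ord b; have : (a : nat) != b by []; lia.
Qed.

Lemma sum_rank_bij (R : nmodType) (T : finType) (V : {set T}) (c : T -> nat)
    (F : nat -> R) :
  {in V &, injective c} -> (forall j, j \in V -> (c j < #|V|)%N) ->
  \sum_(j in V) F (c j) = \sum_(k < #|V|) F k.
Proof.
move=> ci cl; case eN: #|V| => [|N].
  by rewrite big_ord0 big_pred0 // => j; apply/negP => /cl; rewrite eN.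
pose cc j : 'I_N.+1 := inord (c j).
have ccE j : j \in V -> cc j = c j :> nat by move=> jV; rewrite inordK // -eN cl.
have cci : {in V &, injective cc}.
  move=> j j' jV j'V e; apply: ci => //.
  by rewrite -(ccE j jV) -(ccE j' j'V) e.
have ccV : [set cc j | j in V] = [set: 'I_N.+1].
  by apply/eqP; rewrite eqEcard subsetT cardsT card_ord card_in_imset // ?eN /=.
rewrite (eq_bigr (F \o cc)) => [|j jV]; last by rewrite /= ccE.
rewrite -(big_imset (fun k : 'I_N.+1 => F k) cci) /= ccV.
by apply: eq_bigl => k; rewrite inE.
Qed.

Lemma sign_add_double_alt_sum (R : comNzRingType) m :
  (-1) ^+ m + 2%:R * \sum_(k < m) (-1) ^+ k = 1 :> R.
Proof.
elim: m => [|m IH]; first by rewrite big_ord0 mulr0 addr0.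
rewrite big_ord_recr /= exprS -[RHS]IH.
set a := (-1) ^+ m; set S := \sum_(i < m) _; ring.
Qed.

Lemma perm_conj_entry (R : pzRingType) n (sg : 'S_n) (A : 'M[R]_n) x y :
  (perm_mx sg *m A *m (perm_mx sg)^T) x y = A (sg x) (sg y).
Proof. by rewrite tr_perm_mx -row_permE -col_permE !mxE. Qed.

(* The entries of [basis_mx lcp_mx v *m lcp_sol v], case by case; stated for
   an abstract ring since [ring] is very slow on the concrete reals. *)
Lemma sign_basis_diag (R : comNzRingType) (bv bt : bool) (c : R) :
  (if bv then - ((-1) ^+ bt * (-1) ^+ bt * 1) else true%:R) *
  ((-1) ^+ bv * (-1) ^+ bt * c) = (-1) ^+ bt * c.
Proof. by case: bv; case: bt => /=; ring. Qed.

Lemma sign_basis_offdiag (R : comNzRingType) (bv bti btj ba : bool) (c : R) :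
  (if bv then - ((-1) ^+ bti * (-1) ^+ btj * (if ba then 2%:R else 0)) else false%:R) *
  ((-1) ^+ bv * (-1) ^+ btj * c) = (-1) ^+ bti * (if bv && ba then 2%:R * c else 0).
Proof. by case: bv; case: bti; case: btj; case: ba => /=; ring. Qed.

Section Realization.
Variables (n : nat) (M : 'M['F_2]_n) (s : vertex n).
Hypothesis bM : branching_closure M.

Definition depth (x : 'I_n) := #|[set a | influences M a x]|.

Lemma influences_irr a : influences M a a = false.
Proof. by rewrite /influences eqxx. Qed.

Lemma depth_lt a b : influences M a b -> (depth a < depth b)%N.
Proof.
move=> ab; apply: proper_card; apply/properP; split.
  by apply/subsetP => c; rewrite !inE => ca; exact: (bc_trans bM ca ab).
by exists a; rewrite !inE ?influences_irr.
Qed.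

Lemma branching_closure_unit : M \in unitmx.
Proof.
rewrite unitmxE (@det_trig_rank _ _ _ depth).
  by rewrite big1 ?unitr1 // => a _; rewrite bc_diag.
move=> a b nab Mab; apply: depth_lt; rewrite /influences eq_sym nab.
by case: (F2_cases (M a b)) Mab => ->.
Qed.

Definition flip i := (M *m s) i 0 == 1.
Definition sgn i : Rdefinitions.R := (-1) ^+ flip i.

Definition lcp_mx : 'M[Rdefinitions.R]_n := \matrix_(i, j)
  (sgn i * sgn j * (if i == j then 1 else if influences M j i then 2%:R else 0)).
Definition lcp_rhs : 'cV[Rdefinitions.R]_n := \col_i sgn i.

Lemma sgn_mul_sgn i : sgn i * sgn i = 1.
Proof. by rewrite /sgn -expr2 sqrr_sign. Qed.

Lemma lcp_mx_diag a : lcp_mx a a = 1.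
Proof. by rewrite mxE eqxx mulr1 sgn_mul_sgn. Qed.

Lemma lcp_mx_influences a b : a != b -> lcp_mx a b != 0 -> influences M b a.
Proof. by move=> nab; rewrite mxE (negbTE nab); case: influences; rewrite ?mulr0 ?eqxx. Qed.

Lemma lcp_mx_P : P_matrix lcp_mx.
Proof.
move=> S; rewrite /principal_minor; set f := @enum_val _ (mem S).
rewrite (@det_trig_rank _ _ _ (depth \o f)).
  by rewrite big1 ?ltr01 // => a _; rewrite mxE lcp_mx_diag.
move=> a b nab; rewrite mxE => h; apply: depth_lt; apply: lcp_mx_influences h.
by apply: contra nab => /eqP /enum_val_inj ->.
Qed.

Lemma basis_mx_lcp_unit v : basis_mx lcp_mx v \in unitmx.
Proof.
rewrite unitmxE (@det_trig_rank _ _ _ depth).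
  rewrite unitfE; apply/prodf_neq0 => a _; rewrite mxE.
  by case: (v a 0 == 1); rewrite ?lcp_mx_diag ?oppr_eq0 ?eqxx ?oner_eq0.
move=> a b nab; rewrite mxE; case: (v b 0 == 1); last by rewrite (negbTE nab) eqxx.
by rewrite oppr_eq0 => h; apply: depth_lt; apply: lcp_mx_influences h.
Qed.

Definition vbit (v : vertex n) j := v j 0 == 1.
Definition active_influencers (v : vertex n) i := [set a | vbit v a && influences M a i].
Definition nactive (v : vertex n) i := #|active_influencers v i|.

Definition lcp_sol (v : vertex n) : 'cV[Rdefinitions.R]_n :=
  \col_j (-1) ^+ (vbit v j (+) flip j (+) odd (nactive v j)).

Lemma nactive_lt v j k : vbit v j -> influences M j k -> (nactive v j < nactive v k)%N.
Proof.
move=> vj jk; apply: proper_card; apply/properP; split.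
  by apply/subsetP => c; rewrite !inE => /andP[-> cj]; exact: (bc_trans bM cj jk).
by exists j; rewrite !inE ?influences_irr ?andbF // vj jk.
Qed.

Lemma nactive_inj v i : {in active_influencers v i &, injective (nactive v)}.
Proof.
move=> j j'; rewrite !inE => /andP[vj ji] /andP[vj' j'i] e.
apply/eqP; apply: contraT => nj.
by case/orP: (bc_chain bM ji j'i nj) => [/(nactive_lt vj)|/(nactive_lt vj')];
  rewrite e ltnn.
Qed.

Lemma sum_sign_nactive v i : \sum_(j in active_influencers v i) (-1) ^+ nactive v j =
  \sum_(k < nactive v i) (-1) ^+ k :> Rdefinitions.R.
Proof.
apply: (sum_rank_bij (fun k => (-1) ^+ k) (@nactive_inj v i)).
by move=> j; rewrite inE => /andP[vj ji]; apply: nactive_lt.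
Qed.

Lemma basis_mx_lcp_sol_term v i j : basis_mx lcp_mx v i j * lcp_sol v j 0 =
  sgn i * (if j == i then (-1) ^+ nactive v i
           else if vbit v j && influences M j i then 2%:R * (-1) ^+ nactive v j
           else 0).
Proof.
rewrite !mxE /vbit !signr_addb signr_odd /sgn.
have [->|nji] := eqVneq j i; rewrite ?eqxx; first exact: sign_basis_diag.
exact: sign_basis_offdiag.
Qed.

Lemma basis_mx_lcp_sol v : basis_mx lcp_mx v *m lcp_sol v = lcp_rhs.
Proof.
apply/matrixP => i k; rewrite (ord1 k) !mxE.
under eq_bigr => j _ do rewrite basis_mx_lcp_sol_term.
rewrite -big_distrr (bigD1 i) //= eqxx.
transitivity (sgn i * ((-1) ^+ nactive v i +
    2%:R * \sum_(j in active_influencers v i) (-1) ^+ nactive v j)).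
  rewrite mulr_sumr big_mkcond [in RHS]big_mkcond /=.
  congr (sgn i * (_ + _)); apply: eq_bigr => j _; rewrite inE.
  have [->|nji] := eqVneq j i; first by rewrite influences_irr andbF.
  by case: (vbit v j && influences M j i).
by rewrite sum_sign_nactive sign_add_double_alt_sum mulr1.
Qed.

Lemma basic_sol_lcp v : basic_sol lcp_mx lcp_rhs v = lcp_sol v.
Proof. by rewrite /basic_sol -(basis_mx_lcp_sol v) mulKmx // basis_mx_lcp_unit. Qed.

Lemma lcp_nondegenerate : Defs.nondegenerate lcp_mx lcp_rhs.
Proof.
move=> v; split; first exact: basis_mx_lcp_unit.
by move=> i; rewrite basic_sol_lcp mxE signr_eq0.
Qed.

Lemma mulmx_vertex_eq1 (v : vertex n) i :
  ((M *m v) i 0 == 1) = vbit v i (+) odd (nactive v i).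
Proof.
rewrite mxE (bigD1 i) //= bc_diag // mul1r F2_addr_eq1; congr (_ (+) _).
rewrite (eq_bigr (fun j => if j \in active_influencers v i then 1 else 0)) => [|j nji].
  rewrite -big_mkcondr /= (eq_bigl (mem (active_influencers v i))) => [|j].
    by rewrite sumr_const F2_natr_odd; case: odd.
  by rewrite !inE; have [->|_] := eqVneq j i; rewrite ?influences_irr ?andbF.
rewrite inE /influences /vbit (negbTE nji).
by case: (F2_cases (M i j)) => ->; case: (F2_cases (v j 0)) => ->;
  rewrite ?mul0r ?mulr0 ?mulr1.
Qed.

Lemma stickney_watson_lcp : stickney_watson lcp_mx lcp_rhs = [ffun v => M *m (v + s)].
Proof.
apply/ffunP => v; rewrite !ffunE basic_sol_lcp; apply/matrixP => i k.
rewrite (ord1 k) [LHS]mxE [in LHS]mxE signr_lt0.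
apply: F2_eq1_inj; rewrite mulmxDr mxE F2_addr_eq1 mulmx_vertex_eq1 -/(flip i).
by case: (vbit v i); case: (flip i); case: odd.
Qed.

Lemma branching_closure_realizable : realizable [ffun v => M *m (v + s)].
Proof.
exists lcp_mx, lcp_rhs; split; [exact: lcp_mx_P|exact: lcp_nondegenerate|].
by rewrite stickney_watson_lcp.
Qed.

Lemma branching_closure_matousek : matousek_type [ffun v => M *m (v + s)].
Proof.
have [sg sg_depth] := exists_perm_antitone depth.
pose A := \matrix_(a, b) M ((sg^-1)%g a) ((sg^-1)%g b).
have upA : upper_triangular A.
  move=> a b ba; rewrite mxE; apply/eqP; rewrite -F2_neq1; apply/negP => Mab.
  have nab : (sg^-1)%g b != (sg^-1)%g a.
    by apply: contraTneq ba => /perm_inj ->; rewrite ltnn.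
  have := sg_depth _ _ (depth_lt (_ : influences M ((sg^-1)%g b) ((sg^-1)%g a))).
  rewrite !permKV => /(_ _) h.
  have : (a < b)%N by apply: h; rewrite /influences nab Mab.
  by rewrite ltnNge (ltnW ba).
exists sg, A, s; split => //.
  by rewrite unitmxE det_upper_triangular // big1 ?unitr1 // => a _; rewrite mxE bc_diag.
move=> v; rewrite ffunE; congr (_ *m _); apply/matrixP => x y.
by rewrite perm_conj_entry mxE !permK.
Qed.

End Realization.

Lemma det_mx22 (R : comNzRingType) (A : 'M[R]_2) :
  \det A = A 0 0 * A 1 1 - A 0 1 * A 1 0.
Proof.
rewrite (expand_det_row _ 0) !big_ord_recl big_ord0 /cofactor !det_mx11 !mxE /=.
rewrite addr0 expr0 expr1 mul1r mulN1r mulrN.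
by congr (_ * _ - _ * _); congr (A _ _); apply: val_inj.
Qed.

Section PrincipalMinors.
Variables (n : nat) (M : 'M[Rdefinitions.R]_n).

Lemma principal_minor1 i : principal_minor M [set i] = M i i.
Proof.
rewrite /principal_minor; have := @enum_valP _ (mem [set i]).
move: (@enum_val _ (mem [set i])); rewrite cards1 => f fP.
by rewrite det_mx11 mxE; have := fP 0; rewrite inE => /eqP ->.
Qed.

Lemma principal_minor2 i j : i != j ->
  principal_minor M [set i; j] = M i i * M j j - M i j * M j i.
Proof.
move=> nij; rewrite /principal_minor.
have := @enum_valP _ (mem [set i; j]); have := @enum_val_inj _ (mem [set i; j]).
move: (@enum_val _ (mem [set i; j])); rewrite cards2 nij => f fI fP.
have n01 : f 0 != f 1 by apply/eqP => /fI.
rewrite det_mx22 !mxE; have := fP 0; have := fP 1; rewrite !inE.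
case/orP => /eqP e1; case/orP => /eqP e0; rewrite e0 e1 ?eqxx // in n01 *.
by rewrite (mulrC (M i i)) (mulrC (M i j)).
Qed.

End PrincipalMinors.

Lemma sign_mul_gt0 (R : realDomainType) (y : R) : y != 0 -> 0 < (-1) ^+ (y < 0)%R * y.
Proof.
by move=> y0; rewrite {2}(numEsign y) mulrA -signr_addb addbb mul1r normr_gt0.
Qed.

(* Cramer's rule on the face spanned by the first two coordinates gives the
   identity [key] between the values of the basic solutions at the vertices
   {2}, {1} and {1, 2} of that face (X, Y and Z); the signs prescribed for them
   make its three right-hand terms and its left-hand side incompatible unless
   [m21 = m31]. *)
Lemma face_sign_pattern (R : realFieldType)
    (q1 q2 q3 N11 N12 N21 N22 N31 N32 X1 X2 X3 Y1 Y2 Y3 Z1 Z2 Z3 : R)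
    (c1 c2 c3 m21 m31 : bool) :
  q1 = - (N12 * X2) + X1 -> q2 = - (N22 * X2) -> q3 = - (N32 * X2) + X3 ->
  q1 = - (N11 * Y1) -> q2 = - (N21 * Y1) + Y2 -> q3 = - (N31 * Y1) + Y3 ->
  q1 = - (N11 * Z1) - N12 * Z2 -> q2 = - (N21 * Z1) - N22 * Z2 ->
  q3 = - (N31 * Z1) - N32 * Z2 + Z3 ->
  0 < N11 -> 0 < N22 -> 0 < N11 * N22 - N12 * N21 ->
  0 < (-1) ^+ c1 * q1 -> 0 < (-1) ^+ c2 * q2 -> 0 < (-1) ^+ c3 * q3 ->
  0 < (-1) ^+ c1 * X1 -> 0 < (-1) ^+ (m21 (+) c2) * Y2 ->
  0 < (-1) ^+ (m31 (+) c3) * Y3 -> 0 < (-1) ^+ (true (+) c3) * X3 ->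
  0 < (-1) ^+ (m31 (+) (true (+) c3)) * Z3 -> m21 = m31.
Proof.
move=> ex1 ex2 ex3 ey1 ey2 ey3 ez1 ez2 ez3 p11 p22 pdet.
set det := N11 * N22 - N12 * N21 in pdet.
have key : q1 * q2 * (det * Z3) = - (q3 * (N11 * Y2) * (N22 * X1)) +
    q2 * (N11 * Y3) * (N22 * X1) + q1 * (N22 * X3) * (N11 * Y2).
  have eX1 : N22 * X1 = N22 * q1 - N12 * q2 by rewrite ex1 ex2; ring.
  have eY2 : N11 * Y2 = N11 * q2 - N21 * q1 by rewrite ey1 ey2; ring.
  have eY3 : N11 * Y3 = N11 * q3 - N31 * q1 by rewrite ey1 ey3; ring.
  have eX3 : N22 * X3 = N22 * q3 - N32 * q2 by rewrite ex2 ex3; ring.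
  have eZ3 : det * Z3 =
      q1 * (N21 * N32 - N22 * N31) - q2 * (N11 * N32 - N12 * N31) + q3 * det.
    by rewrite /det ez1 ez2 ez3; ring.
  by rewrite eX1 eY2 eY3 eX3 eZ3 /det; ring.
clear ex1 ex2 ex3 ey1 ey2 ey3 ez1 ez2 ez3.
have signed (b : bool) y : 0 < (-1) ^+ b * y -> exists2 p, 0 < p & y = (-1) ^+ b * p.
  by move=> h; exists ((-1) ^+ b * y); rewrite // mulrA -expr2 sqrr_sign mul1r.
move=> /signed[a1 pa1 e1] /signed[a2 pa2 e2] /signed[a3 pa3 e3] /signed[b1 pb1 eX1].
move=> /signed[b2 pb2 eY2] /signed[b3 pb3 eY3] /signed[b4 pb4 eX3] /signed[b5 pb5 eZ3].
subst q1 q2 q3 X1 Y2 Y3 X3 Z3.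
have PL : 0 < a1 * a2 * (det * b5) by rewrite !mulr_gt0.
have P1 : 0 < a3 * (N11 * b2) * (N22 * b1) by rewrite !mulr_gt0.
have P2 : 0 < a2 * (N11 * b3) * (N22 * b1) by rewrite !mulr_gt0.
have P3 : 0 < a1 * (N22 * b4) * (N11 * b2) by rewrite !mulr_gt0.
move: key PL P1 P2 P3.
by case: c1; case: c2; case: c3; case: m21; case: m31 => //= key;
  rewrite ?expr1 ?expr0 in key *; lra.
Qed.

Section Necessity.
Variables (n : nat) (Mr : 'M[Rdefinitions.R]_n) (q : 'cV[Rdefinitions.R]_n).
Variables (M : 'M['F_2]_n) (s : vertex n).
Hypotheses (PMr : P_matrix Mr) (ND : Defs.nondegenerate Mr q)
  (SW : forall v, stickney_watson Mr q v = M *m (v + s)).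

Definition set_vertex (X : {set 'I_n}) : vertex n := \col_l (if l \in X then 1 else 0).

Lemma set_vertex_eq1 (X : {set 'I_n}) l : (set_vertex X l 0 == 1) = (l \in X).
Proof. by rewrite mxE; case: (l \in X). Qed.

Let sol (X : {set 'I_n}) r : Rdefinitions.R := basic_sol Mr q (set_vertex X) r 0.

Lemma basic_sol_row (X : {set 'I_n}) r :
  q r 0 = - (\sum_(l in X) Mr r l * sol X l) + (if r \in X then 0 else sol X r).
Proof.
have e : basis_mx Mr (set_vertex X) *m basic_sol Mr q (set_vertex X) = q.
  by rewrite /basic_sol mulmxA mulmxV ?mul1mx //; case: (ND (set_vertex X)).
rewrite -{1}e mxE (bigID (mem X)) /= -sumrN; congr (_ + _).
  by apply: eq_bigr => l lX; rewrite mxE set_vertex_eq1 lX mulNr.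
have [rX|rX] := boolP (r \in X).
  apply: big1 => l lX; rewrite mxE set_vertex_eq1 (negbTE lX).
  by rewrite (_ : (r == l) = false) ?mul0r //; apply: contraNF lX => /eqP <-.
rewrite (bigD1 r) //= big1 ?addr0 => [|l /andP[lX nlr]].
  by rewrite mxE set_vertex_eq1 (negbTE rX) eqxx mul1r.
by rewrite mxE set_vertex_eq1 (negbTE lX) eq_sym (negbTE nlr) mul0r.
Qed.

Lemma basic_sol_sign_gt0 (X : {set 'I_n}) r :
  0 < (-1) ^+ (\sum_(l in X) M r l + (M *m s) r 0 == 1) * sol X r.
Proof.
have : (sol X r < 0) = (\sum_(l in X) M r l + (M *m s) r 0 == 1).
  move: (SW (set_vertex X)); rewrite /stickney_watson ffunE.
  move/(congr1 (fun A : 'cV['F_2]_n => A r 0)).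
  rewrite [Y in Y = _ -> _]mxE mulmxDr [Y in _ = Y -> _]mxE.
  have -> : (M *m set_vertex X) r 0 = \sum_(l in X) M r l.
    rewrite mxE [RHS]big_mkcond; apply: eq_bigr => l _; rewrite mxE.
    by case: (l \in X); rewrite ?mulr1 ?mulr0.
  by rewrite -/(sol X r) => <-; case: (sol X r < 0).
by move=> <-; apply: sign_mul_gt0; case: (ND (set_vertex X)) => _; apply.
Qed.

Lemma rhs_sol0 r : q r 0 = sol set0 r.
Proof. by rewrite (basic_sol_row set0 r) big_set0 oppr0 add0r inE. Qed.

Lemma realizable_face i j k : i != j -> j != k -> i != k -> M i j = 0 -> M k j = 1 ->
  (M j i == 1) = (M k i == 1).
Proof.
move=> nij njk nik Mij Mkj.
have iJ : i \notin [set j] by rewrite inE.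
have jI : j \notin [set i] by rewrite inE eq_sym.
have kJ : k \notin [set j] by rewrite inE eq_sym.
have kI : k \notin [set i] by rewrite inE eq_sym.
have kIJ : k \notin [set i; j] by rewrite !inE negb_or !(eq_sym k) nik njk.
have sum2 (f : 'I_n -> Rdefinitions.R) : \sum_(l in [set i; j]) f l = f i + f j.
  by rewrite big_setU1 ?big_set1 // inE.
have sum2F (f : 'I_n -> 'F_2) : \sum_(l in [set i; j]) f l = f i + f j.
  by rewrite big_setU1 ?big_set1 // inE.
have sgn0 r : 0 < (-1) ^+ ((M *m s) r 0 == 1) * q r 0.
  by rewrite rhs_sol0; have := basic_sol_sign_gt0 set0 r; rewrite big_set0 add0r.
apply: (@face_sign_pattern _ (q i 0) (q j 0) (q k 0) (Mr i i) (Mr i j) (Mr j i) (Mr j j)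
  (Mr k i) (Mr k j) (sol [set j] i) (sol [set j] j) (sol [set j] k)
  (sol [set i] i) (sol [set i] j) (sol [set i] k)
  (sol [set i; j] i) (sol [set i; j] j) (sol [set i; j] k)).
- by rewrite (basic_sol_row [set j] i) big_set1 (negbTE iJ).
- by rewrite (basic_sol_row [set j] j) big_set1 set11 addr0.
- by rewrite (basic_sol_row [set j] k) big_set1 (negbTE kJ).
- by rewrite (basic_sol_row [set i] i) big_set1 set11 addr0.
- by rewrite (basic_sol_row [set i] j) big_set1 (negbTE jI).
- by rewrite (basic_sol_row [set i] k) big_set1 (negbTE kI).
- by rewrite (basic_sol_row [set i; j] i) sum2 !inE eqxx addr0 opprD.
- by rewrite (basic_sol_row [set i; j] j) sum2 !inE eqxx orbT addr0 opprD.
- by rewrite (basic_sol_row [set i; j] k) sum2 (negbTE kIJ) opprD.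
- by rewrite -principal_minor1.
- by rewrite -principal_minor1.
- by rewrite -principal_minor2.
- exact: sgn0.
- exact: sgn0.
- exact: sgn0.
- by have := basic_sol_sign_gt0 [set j] i; rewrite big_set1 Mij add0r.
- by have := basic_sol_sign_gt0 [set i] j; rewrite big_set1 F2_addr_eq1.
- by have := basic_sol_sign_gt0 [set i] k; rewrite big_set1 F2_addr_eq1.
- by have := basic_sol_sign_gt0 [set j] k; rewrite big_set1 Mkj F2_addr_eq1.
- by have := basic_sol_sign_gt0 [set i; j] k; rewrite sum2F Mkj !F2_addr_eq1 eqxx -addbA.
Qed.

End Necessity.

Section MatousekType.
Variable n : nat.

Lemma branching_closureI (M : 'M['F_2]_n) :
  (forall i, M i i = 1) ->
  (forall a b, influences M a b -> ~~ influences M b a) ->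
  (forall i j k, i != j -> j != k -> i != k -> M i j = 0 -> M k j = 1 ->
     (M j i == 1) = (M k i == 1)) ->
  branching_closure M.
Proof.
move=> diag asym face.
have face' a b c : influences M b c -> ~~ influences M b a -> a != b -> a != c ->
    influences M a b = influences M a c.
  case/andP=> nbc Mcb nba nab nac; rewrite /influences nab nac /=.
  have Mab : M a b = 0.
    by apply/eqP; rewrite -F2_neq1; move: nba; rewrite /influences eq_sym nab.
  exact: face nab nbc nac Mab (eqP Mcb).
constructor=> // [a b c ab bc|a b c ac bc nab].
  have nac : a != c by apply: contraTneq ab => ->; apply: asym.
  by rewrite -(face' _ _ _ bc (asym _ _ ab)) //; case/andP: ab.
apply: contraT; rewrite negb_or => /andP[nab' nba].
by rewrite (face' _ _ _ bc nba nab) ?ac // in nab'; case/andP: ac.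
Qed.

Lemma upper_triangular_unit_diag (A : 'M['F_2]_n) i :
  upper_triangular A -> A \in unitmx -> A i i = 1.
Proof.
move=> upA; rewrite unitmxE det_upper_triangular // unitfE => /prodf_neq0 /(_ i isT).
by case: (F2_cases (A i i)) => ->; rewrite ?eqxx.
Qed.

Lemma realizable_matousek_closure (sg : 'S_n) (A : 'M['F_2]_n) (s : vertex n)
    (Mr : 'M[Rdefinitions.R]_n) (q : 'cV[Rdefinitions.R]_n) :
  upper_triangular A -> A \in unitmx -> P_matrix Mr -> Defs.nondegenerate Mr q ->
  (forall v, stickney_watson Mr q v = (perm_mx sg *m A *m (perm_mx sg)^T) *m (v + s)) ->
  branching_closure (perm_mx sg *m A *m (perm_mx sg)^T).
Proof.
move=> upA uA PMr ND SW; apply: branching_closureI.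
- by move=> i; rewrite perm_conj_entry upper_triangular_unit_diag.
- have lt a b : influences (perm_mx sg *m A *m (perm_mx sg)^T) a b -> (sg b < sg a)%N.
    case/andP => nab; rewrite perm_conj_entry ltn_neqAle => Aab; apply/andP; split.
      by apply: contra nab => /eqP /val_inj /perm_inj ->.
    by rewrite leqNgt; apply: contraTN Aab => ?; rewrite upA.
  by move=> a b /lt ab; apply/negP => /lt; rewrite ltnNge (ltnW ab).
- exact: realizable_face PMr ND SW.
Qed.

Definition matousek_outmap (p : 'M['F_2]_n * vertex n) : outmap n :=
  [ffun v => p.1 *m (v + p.2)].

Lemma matousek_outmap_inj :
  {in setX (branching_closures n) [set: vertex n] &, injective matousek_outmap}.
Proof.
move=> [M1 s1] [M2 s2]; rewrite !inE /= !andbT.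
move=> /branching_closureP bM1 /branching_closureP bM2 e.
have ev v : M1 *m (v + s1) = M2 *m (v + s2).
  by have := congr1 (fun f : outmap n => f v) e; rewrite !ffunE.
have e0 := ev 0; rewrite !add0r in e0.
have eM : M1 = M2.
  apply/matrixP => i j; have := ev (delta_mx j 0); rewrite !mulmxDr e0 => /addIr.
  by rewrite -!colE => /(congr1 (fun A : 'cV['F_2]_n => A i 0)); rewrite !mxE.
subst M2; congr (_, _); have uM1 := branching_closure_unit bM1.
by rewrite -[s1](mulKmx uM1) e0 mulKmx.
Qed.

End MatousekType.

Theorem lemma10 (n : nat) :
  exists S : {set outmap n},
    (forall o : outmap n, o \in S <-> (matousek_type o /\ realizable o)) /\
    #|S| = (2 ^ n * (n.+1) ^ (n.-1))%N.
Proof.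
exists [set matousek_outmap p | p in setX (branching_closures n) [set: vertex n]]; split.
  move=> o; split.
    case/imsetP => [[M s]]; rewrite !inE /= andbT => /branching_closureP bM ->.
    by split; [apply: branching_closure_matousek|apply: branching_closure_realizable].
  case=> [[sg [A [s [upA uA oE]]]] [Mr [q [PMr ND oSW]]]].
  apply/imsetP; exists (perm_mx sg *m A *m (perm_mx sg)^T, s).
    rewrite !inE andbT; apply/branching_closureP.
    by apply: (realizable_matousek_closure upA uA PMr ND) => v; rewrite -oSW.
  by apply/ffunP => v; rewrite ffunE.
rewrite card_in_imset; last exact: matousek_outmap_inj.
by rewrite cardsX card_branching_closures cardsT card_mx card_Fp // muln1 mulnC.
Qed.
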